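(* Let $\rho:\mathfrak g\to\mathfrak{gl}(V)$ be a representation of a Lie algebra $\mathfrak g$. Define $\Phi:\mathrm{Hom}(\wedge^kV,\mathfrak g)\to\mathrm{Hom}(\wedge^kV\otimes V,V)$, $k\ge0$, by $\Phi(f)(u_1,\dots,u_k,u_{k+1})=\rho(f(u_1,\dots,u_k))(u_{k+1})$. Then $\Phi$ is a homomorphism of graded Lie algebras from $(\mathcal C^*(V,\mathfrak g),[\![\cdot,\cdot]\!])$ to $(C^*(V,V),[\cdot,\cdot]^C)$, i.e. $\Phi([\![P,Q]\!])=[\Phi(P),\Phi(Q)]^C$ for all $P\in\mathrm{Hom}(\wedge^nV,\mathfrak g)$, $Q\in\mathrm{Hom}(\wedge^mV,\mathfrak g)$.
   Context: All vector spaces finite-dimensional over an algebraically closed field of characteristic $0$. $\mathbb S_{(i_1,\dots,i_k)}$ denotes unshuffles (permutations increasing on consecutive blocks of sizes $i_1,\dots,i_k$). $\mathcal C^*(V,\mathfrak g)=\bigoplus_k\mathrm{Hom}(\wedge^kV,\mathfrak g)$ with bracket $[\![P,Q]\!](u_1,\dots,u_{m+n})=\sum_{\sigma\in\mathbb S_{(m,1,n-1)}}(-1)^{\sigma}P(\rho(Q(u_{\sigma(1)},\dots,u_{\sigma(m)}))u_{\sigma(m+1)},u_{\sigma(m+2)},\dots,u_{\sigma(m+n)})-(-1)^{mn}\sum_{\sigma\in\mathbb S_{(n,1,m-1)}}(-1)^{\sigma}Q(\rho(P(u_{\sigma(1)},\dots,u_{\sigma(n)}))u_{\sigma(n+1)},u_{\sigma(n+2)},\dots,u_{\sigma(m+n)})+(-1)^{mn}\sum_{\sigma\in\mathbb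 S_{(n,m)}}(-1)^{\sigma}[P(u_{\sigma(1)},\dots,u_{\sigma(n)}),Q(u_{\sigma(n+1)},\dots,u_{\sigma(m+n)})]$ for $P\in\mathrm{Hom}(\wedge^nV,\mathfrak g)$, $Q\in\mathrm{Hom}(\wedge^mV,\mathfrak g)$. $C^*(V,V)=\bigoplus_{k\ge0}\mathrm{Hom}(\wedge^kV\otimes V,V)$; for $\alpha\in\mathrm{Hom}(\wedge^nV\otimes V,V)$, $\beta\in\mathrm{Hom}(\wedge^mV\otimes V,V)$, define $(\alpha\circ\beta)(u_1,\dots,u_{m+n+1})=\sum_{\sigma\in\mathbb S_{(m,1,n-1)}}(-1)^{\sigma}\alpha(\beta(u_{\sigma(1)},\dots,u_{\sigma(m+1)}),u_{\sigma(m+2)},\dots,u_{\sigma(m+n)},u_{m+n+1})+(-1)^{mn}\sum_{\sigma\in\mathbb S_{(n,m)}}(-1)^{\sigma}\alpha(u_{\sigma(1)},\dots,u_{\sigma(n)},\beta(u_{\sigma(n+1)},\dots,u_{\sigma(m+n)},u_{m+n+1}))$ and $[\alpha,\beta]^C=\alpha\circ\beta-(-1)^{mn}\beta\circ\alpha$; this is a graded Lie algebra with $\mathrm{Hom}(\wedge^kV\otimes V,V)$ in degree $k$. *)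

From HB Require Import structures.
From mathcomp Require Import all_boot all_order all_algebra all_fingroup all_field.
Set Implicit Arguments. Unset Strict Implicit. Unset Printing Implicit Defensive.
Import GRing.Theory.
Local Open Scope ring_scope.

(* Cochains of arity k are functions ('I_k -> W') -> W : argument i (0-based)
   is u i.  Hom(/\^k V, W) = multilinear alternating such functions. *)

Section Cochains.
Variables (K : fieldType) (V g : vectType K).

Definition multilinear (W : lmodType K) k (f : ('I_k -> V) -> W) : Prop :=
  forall (u : 'I_k -> V) (i : 'I_k) (a : K) (x y : V),
    f (fun j => if j == i then a *: x + y else u j)
    = a *: f (fun j => if j == i then x else u j)
      + f (fun j => if j == i then y else u j).

Definition alternating (W : lmodType K) k (f : ('I_k -> V) -> W) : Prop :=
  forall (u : 'I_k -> V) (i j : 'I_k), i != j -> u i = u j -> f u = 0.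

Fixpoint blk (bs : seq nat) (i : nat) : nat :=
  if bs is b :: bs' then (if i < b then 0 else (blk bs' (i - b)).+1)%N else 0%N.

Definition unshuffle N (bs : seq nat) (s : 'S_N) : bool :=
  [forall i : 'I_N, forall j : 'I_N,
     ((i < j)%N && (blk bs i == blk bs j)) ==> (s i < s j)%N].

Definition permseq N (u : 'I_N -> V) (s : 'S_N) : seq V :=
  [seq u (s i) | i <- enum 'I_N].

Definition sgn N (s : 'S_N) : K := (-1) ^+ odd_perm s.

Definition lie_bracket_C (br : g -> g -> g) (rho : g -> 'End(V)) (n m : nat)
  (P : ('I_n -> V) -> g) (Q : ('I_m -> V) -> g) : ('I_(m + n) -> V) -> g :=
  fun u =>
    (if n is 0 then 0 else
     \sum_(s : 'S_(m + n) | unshuffle [:: m; 1; n.-1]%N s)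
        sgn s *: P (fun i : 'I_n =>
          if val i == 0%N
          then rho (Q (fun j : 'I_m => nth 0 (permseq u s) j)) (nth 0 (permseq u s) m)
          else nth 0 (permseq u s) (m + i)))
    - (-1) ^+ (m * n) *:
    (if m is 0 then 0 else
     \sum_(s : 'S_(m + n) | unshuffle [:: n; 1; m.-1]%N s)
        sgn s *: Q (fun i : 'I_m =>
          if val i == 0%N
          then rho (P (fun j : 'I_n => nth 0 (permseq u s) j)) (nth 0 (permseq u s) n)
          else nth 0 (permseq u s) (n + i)))
    + (-1) ^+ (m * n) *:
     \sum_(s : 'S_(m + n) | unshuffle [:: n; m] s)
        sgn s *: br (P (fun j : 'I_n => nth 0 (permseq u s) j))
                    (Q (fun j : 'I_m => nth 0 (permseq u s) (n + j))).

(* alpha o beta on C^*(V,V): alpha in Hom(/\^n V (x) V, V) (arity n+1),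
   beta in Hom(/\^m V (x) V, V) (arity m+1); result has arity m+n+1 *)
Definition circC (n m : nat) (alpha : ('I_n.+1 -> V) -> V)
  (beta : ('I_m.+1 -> V) -> V) : ('I_(m + n).+1 -> V) -> V :=
  fun u =>
    let w : 'I_(m + n) -> V := fun i => u (widen_ord (leqnSn _) i) in
    let last := u ord_max in
    (if n is 0 then 0 else
     \sum_(s : 'S_(m + n) | unshuffle [:: m; 1; n.-1]%N s)
        sgn s *: alpha (fun i : 'I_n.+1 =>
          if val i == 0%N then beta (fun j : 'I_m.+1 => nth 0 (permseq w s) j)
          else if val i == n then last
          else nth 0 (permseq w s) (m + i)))
    + (-1) ^+ (m * n) *:
     \sum_(s : 'S_(m + n) | unshuffle [:: n; m] s)
        sgn s *: alpha (fun i : 'I_n.+1 =>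
          if (val i < n)%N then nth 0 (permseq w s) i
          else beta (fun j : 'I_m.+1 =>
                 if (val j < m)%N then nth 0 (permseq w s) (n + j) else last)).

Definition bracketC (n m : nat) (alpha : ('I_n.+1 -> V) -> V)
  (beta : ('I_m.+1 -> V) -> V) : ('I_(m + n).+1 -> V) -> V :=
  fun u => circC alpha beta u
    - (-1) ^+ (m * n) *:
      circC beta alpha (fun i => u (cast_ord (congr1 succn (addnC n m)) i)).

Definition Phi (rho : g -> 'End(V)) (k : nat) (f : ('I_k -> V) -> g)
  : ('I_k.+1 -> V) -> V :=
  fun u => rho (f (fun i => u (widen_ord (leqnSn k) i))) (u ord_max).

End Cochains.

From HB Require Import structures.
From mathcomp Require Import all_boot all_order all_algebra all_fingroup all_field.
From mathcomp Require Import zify.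
From Stdlib Require Import FunctionalExtensionality.
Set Implicit Arguments. Unset Strict Implicit. Unset Printing Implicit Defensive.
Import GRing.Theory.
Local Open Scope ring_scope.

(* Phi only feeds rho (f (u_1, ..., u_k)) with the last argument, so Phi maps
   each insertion sum of [[P, Q]] term by term onto the insertion sum of
   Phi P o Phi Q, resp. of Phi Q o Phi P once 'I_(n + m) is transported to
   'I_(m + n).  Since rho is a Lie morphism, the wedge sum of rho [P, Q] splits
   into a sum of rho P rho Q, which is the wedge sum of Phi P o Phi Q, and a sum
   of rho Q rho P over (n, m)-unshuffles; precomposing with the rotation of
   'I_(m + n) by m, which maps (m, n)-unshuffles onto (n, m)-unshuffles and has
   sign (-1)^(mn), turns the latter into the wedge sum of Phi Q o Phi P. *)

Definition cycle_perm N : 'S_N :=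
  match N with 0 => 1%g | k.+1 => lift_perm ord_max ord0 1%g end.

Definition rot_perm N a : 'S_N := (cycle_perm N ^+ a)%g.

Lemma cycle_permE N (i : 'I_N) : val (cycle_perm N i) = (i.+1 %% N)%N.
Proof.
case: N i => [[]//|k] i /=.
case: (unliftP ord_max i) => [j ->|->]; last by rewrite lift_perm_id modnn.
rewrite lift_perm_lift perm1 /= /bump /= leqNgt ltn_ord add0n add1n.
by rewrite modn_small // ltnS ltn_ord.
Qed.

Lemma odd_cycle_perm N : odd_perm (cycle_perm N) = odd N.-1.
Proof.
by case: N => [|k]; rewrite ?odd_perm1 //= odd_lift_perm odd_perm1 /= !addbF.
Qed.

Lemma rot_permE N a (i : 'I_N) : val (rot_perm N a i) = ((i + a) %% N)%N.
Proof.
elim: a => [|a IHa]; first by rewrite /rot_perm expg0 perm1 addn0 modn_small.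
by rewrite /rot_perm expgSr permM cycle_permE IHa -addn1 modnDml addn1 addnS.
Qed.

Lemma odd_rot_perm N a : odd_perm (rot_perm N a) = odd (a * N.-1).
Proof.
elim: a => [|a IHa]; first by rewrite /rot_perm expg0 odd_perm1.
by rewrite /rot_perm expgSr odd_permM IHa odd_cycle_perm mulSn oddD addbC.
Qed.

Lemma odd_rot_perm_swap m n : odd_perm (rot_perm (m + n) m) = odd (m * n).
Proof.
rewrite odd_rot_perm; case: m => [|m] //=; rewrite !oddM oddD /=.
by case: (odd m).
Qed.

Lemma rot_perm_blockE N a b (i : 'I_N) : (a + b)%N = N ->
  val (rot_perm N a i) = if (i < b)%N then (i + a)%N else (i - b)%N.
Proof.
move=> abN; rewrite rot_permE; move: (nat_of_ord i) (ltn_ord i) => {}i.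
rewrite -abN => iab; case: (ltnP i b) => ib; first by rewrite modn_small //; lia.
by rewrite (_ : i + a = i - b + (a + b))%N ?modnDr ?modn_small //; lia.
Qed.

Lemma rot_perm_cancel N a b :
  (a + b)%N = N -> (rot_perm N b * rot_perm N a)%g = 1%g.
Proof.
move=> abN; apply/permP => i; apply: val_inj.
by rewrite permM perm1 !rot_permE modnDml -addnA (addnC b) abN modnDr modn_small.
Qed.

Lemma blk_pair a b i : (i < a + b)%N -> blk [:: a; b] i = (a <= i)%N.
Proof. by move=> iab /=; case: ltnP => ai //=; rewrite ltn_subLR ?iab. Qed.

Lemma unshuffle_rot_perm N a b (s : 'S_N) : (a + b)%N = N ->
  unshuffle [:: a; b] s -> unshuffle [:: b; a] (rot_perm N a * s).
Proof.
move=> abN /forallP s_unsh; apply/forallP => i; apply/forallP => j.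
apply/implyP => /andP [ij same_blk]; rewrite !permM.
apply: (implyP (forallP (s_unsh (rot_perm N a i)) (rot_perm N a j))).
have lt_ab (k : 'I_N) : (k < a + b)%N by rewrite abN.
have lt_ba (k : 'I_N) : (k < b + a)%N by rewrite addnC lt_ab.
have := lt_ab i; have := lt_ab j; move: same_blk.
rewrite (blk_pair (lt_ba i)) (blk_pair (lt_ba j)).
rewrite (blk_pair (lt_ab (rot_perm N a i))) (blk_pair (lt_ab (rot_perm N a j))).
rewrite !(rot_perm_blockE _ abN).
by case: (ltnP i b) => ib; case: (ltnP j b) => jb /= /eqP same_blk jab iab;
  apply/andP; split; try lia; apply/eqP; lia.
Qed.

Lemma unshuffle_rot_permE N a b (s : 'S_N) : (a + b)%N = N ->
  unshuffle [:: b; a] (rot_perm N a * s) = unshuffle [:: a; b] s.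
Proof.
move=> abN; apply/idP/idP; last exact: unshuffle_rot_perm.
move/(unshuffle_rot_perm (etrans (addnC b a) abN)).
by rewrite mulgA rot_perm_cancel ?mul1g.
Qed.

Section Unshuffles.
Variables (K : fieldType) (V : vectType K).

Lemma nth_permseq N (w : 'I_N -> V) (s : 'S_N) i (iN : (i < N)%N) :
  nth 0 (permseq w s) i = w (s (Ordinal iN)).
Proof.
rewrite /permseq (nth_map (Ordinal iN)) ?size_enum_ord //.
by congr (w (s _)); apply: val_inj; rewrite /= nth_enum_ord.
Qed.

Lemma sum_unshuffle_swap (W : lmodType K) m n (w : 'I_(m + n) -> V)
    (F : ('I_n -> V) -> ('I_m -> V) -> W) :
  \sum_(t | unshuffle [:: n; m] t) sgn K t *:
     F (fun j => nth 0 (permseq w t) j) (fun j => nth 0 (permseq w t) (n + j))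
  = (-1) ^+ (n * m) *: \sum_(s | unshuffle [:: m; n] s) sgn K s *:
     F (fun j => nth 0 (permseq w s) (m + j)) (fun j => nth 0 (permseq w s) j).
Proof.
pose r := rot_perm (m + n) m.
rewrite (reindex (mulg r)); last exact: onW_bij (Bijective (mulKg r) (mulKVg r)).
rewrite scaler_sumr; apply: eq_big => [s | s _]; first exact: unshuffle_rot_permE.
rewrite /sgn odd_permM signr_addb odd_rot_perm_swap mulnC signr_odd scalerA.
have rE (i : 'I_(m + n)) := rot_perm_blockE (b := n) i (erefl (m + n)%N).
congr (_ *: F _ _); apply: functional_extensionality => j.
- have jN : (j < m + n)%N by rewrite ltn_addl.
  have mjN : (m + j < m + n)%N by rewrite ltn_add2l.
  rewrite (nth_permseq _ _ jN) (nth_permseq _ _ mjN) permM.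
  by congr (w (s _)); apply: val_inj; rewrite rE /= ltn_ord addnC.
- have njN : (n + j < m + n)%N by rewrite addnC ltn_add2r.
  have jN : (j < m + n)%N by rewrite ltn_addr.
  rewrite (nth_permseq _ _ njN) (nth_permseq _ _ jN) permM.
  by congr (w (s _)); apply: val_inj; rewrite rE /= ltnNge leq_addr addKn.
Qed.

End Unshuffles.

Section PhiBracket.
Variables (K : fieldType) (V g : vectType K) (rho : {linear g -> 'End(V)}).

(* The ambient arity N is a parameter so that the sums of circC on 'I_(n + m)
   can be compared with those on 'I_(m + n) (circC_castE). *)
Definition bracket_insertion N n m (P : ('I_n -> V) -> g) (Q : ('I_m -> V) -> g)
    (w : 'I_N -> V) : g :=
  if n is 0 then 0 else
  \sum_(s : 'S_N | unshuffle [:: m; 1; n.-1]%N s)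
     sgn K s *: P (fun i : 'I_n =>
       if val i == 0%N
       then rho (Q (fun j : 'I_m => nth 0 (permseq w s) j))
              (nth 0 (permseq w s) m)
       else nth 0 (permseq w s) (m + i)).

Definition bracket_wedge (br : g -> g -> g) N n m (P : ('I_n -> V) -> g)
    (Q : ('I_m -> V) -> g) (w : 'I_N -> V) : g :=
  \sum_(s : 'S_N | unshuffle [:: n; m] s)
     sgn K s *: br (P (fun j : 'I_n => nth 0 (permseq w s) j))
                   (Q (fun j : 'I_m => nth 0 (permseq w s) (n + j))).

Definition circ_insertion N n m (alpha : ('I_n.+1 -> V) -> V)
    (beta : ('I_m.+1 -> V) -> V) (w : 'I_N -> V) (last : V) : V :=
  if n is 0 then 0 else
  \sum_(s : 'S_N | unshuffle [:: m; 1; n.-1]%N s)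
     sgn K s *: alpha (fun i : 'I_n.+1 =>
       if val i == 0%N then beta (fun j : 'I_m.+1 => nth 0 (permseq w s) j)
       else if val i == n then last
       else nth 0 (permseq w s) (m + i)).

Definition circ_wedge N n m (alpha : ('I_n.+1 -> V) -> V)
    (beta : ('I_m.+1 -> V) -> V) (w : 'I_N -> V) (last : V) : V :=
  \sum_(s : 'S_N | unshuffle [:: n; m] s)
     sgn K s *: alpha (fun i : 'I_n.+1 =>
       if (val i < n)%N then nth 0 (permseq w s) i
       else beta (fun j : 'I_m.+1 =>
              if (val j < m)%N then nth 0 (permseq w s) (n + j) else last)).

Lemma lie_bracket_CE br n m (P : ('I_n -> V) -> g) (Q : ('I_m -> V) -> g)
    (w : 'I_(m + n) -> V) :
  lie_bracket_C br rho P Q w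
  = bracket_insertion P Q w - (-1) ^+ (m * n) *: bracket_insertion Q P w
    + (-1) ^+ (m * n) *: bracket_wedge br P Q w.
Proof. by []. Qed.

Lemma circCE n m (alpha : ('I_n.+1 -> V) -> V) (beta : ('I_m.+1 -> V) -> V)
    (u : 'I_(m + n).+1 -> V) :
  let w i := u (widen_ord (leqnSn _) i) in
  circC alpha beta u
  = circ_insertion alpha beta w (u ord_max)
    + (-1) ^+ (m * n) *: circ_wedge alpha beta w (u ord_max).
Proof. by []. Qed.

Lemma circC_castE n m N (e : (m + n)%N = N) (alpha : ('I_n.+1 -> V) -> V)
    (beta : ('I_m.+1 -> V) -> V) (u : 'I_N.+1 -> V) :
  let w i := u (widen_ord (leqnSn _) i) in
  circC alpha beta (fun i => u (cast_ord (congr1 succn e) i))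
  = circ_insertion alpha beta w (u ord_max)
    + (-1) ^+ (m * n) *: circ_wedge alpha beta w (u ord_max).
Proof.
case: N / e u => u.
have -> : (fun i => u (cast_ord (congr1 succn erefl) i)) = u.
  by apply: functional_extensionality => i; rewrite cast_ord_id.
exact: circCE.
Qed.

Lemma Phi_bracket_insertion N n m (P : ('I_n -> V) -> g) (Q : ('I_m -> V) -> g)
    (w : 'I_N -> V) (last : V) :
  rho (bracket_insertion P Q w) last
  = circ_insertion (Phi rho P) (Phi rho Q) w last.
Proof.
case: n P => [|n] P; first by rewrite linear0 zero_lfunE.
rewrite linear_sum sum_lfunE; apply: eq_bigr => s _.
rewrite linearZ scale_lfunE /Phi /= eqxx; congr (_ *: rho (P _) _).
by apply: functional_extensionality => i; case: eqP => // _; rewrite ltn_eqF.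
Qed.

Lemma Phi_bracket_wedge (br : g -> g -> g)
    (rho_hom : forall x y,
       rho (br x y) = (rho x \o rho y)%VF - (rho y \o rho x)%VF)
    n m (P : ('I_n -> V) -> g) (Q : ('I_m -> V) -> g) (w : 'I_(m + n) -> V)
    (last : V) :
  rho (bracket_wedge br P Q w) last
  = circ_wedge (Phi rho P) (Phi rho Q) w last
    - (-1) ^+ (n * m) *: circ_wedge (Phi rho Q) (Phi rho P) w last.
Proof.
rewrite linear_sum sum_lfunE.
transitivity (\sum_(t | unshuffle [:: n; m] t) sgn K t *:
      rho (P (fun j => nth 0 (permseq w t) j))
          (rho (Q (fun j => nth 0 (permseq w t) (n + j))) last)
    - \sum_(t | unshuffle [:: n; m] t) sgn K t *:
      rho (Q (fun j => nth 0 (permseq w t) (n + j)))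
          (rho (P (fun j => nth 0 (permseq w t) j)) last)).
  rewrite -sumrB; apply: eq_bigr => t _.
  rewrite linearZ scale_lfunE rho_hom -scalerBr.
  by rewrite add_lfunE opp_lfunE !comp_lfunE.
rewrite (sum_unshuffle_swap w (fun x y => rho (Q y) (rho (P x) last))).
have if_ltn_ord k (f : 'I_k -> V) x :
    (fun i : 'I_k => if (i < k)%N then f i else x) = f.
  by apply: functional_extensionality => i; rewrite ltn_ord.
by congr (_ - _ *: _); apply: eq_bigr => s _; rewrite /Phi /= !ltnn !if_ltn_ord.
Qed.

End PhiBracket.

Theorem proposition2p8 (K : closedFieldType) (charK0 : [pchar K] =i pred0)
  (V g : vectType K) (br : g -> g -> g)
  (br_linl : forall (a : K) (x y z : g), br (a *: x + y) z = a *: br x z + br y z)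
  (br_linr : forall (a : K) (x y z : g), br z (a *: x + y) = a *: br z x + br z y)
  (br_alt : forall x : g, br x x = 0)
  (br_jacobi : forall x y z : g,
     br x (br y z) + br y (br z x) + br z (br x y) = 0)
  (rho : {linear g -> 'End(V)})
  (rho_hom : forall x y : g,
     rho (br x y) = ((rho x \o rho y)%VF - (rho y \o rho x)%VF))
  (n m : nat) (P : ('I_n -> V) -> g) (Q : ('I_m -> V) -> g)
  (P_ml : multilinear P) (P_alt : alternating P)
  (Q_ml : multilinear Q) (Q_alt : alternating Q) :
  forall u : 'I_(m + n).+1 -> V,
    Phi rho (lie_bracket_C br rho P Q) u
    = bracketC (Phi rho P) (Phi rho Q) u.
Proof.
move=> u; rewrite [LHS]/Phi lie_bracket_CE /bracketC circCE circC_castE /=.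
rewrite !(linearD, linearN, linearZ) /= !(add_lfunE, opp_lfunE, scale_lfunE).
rewrite !Phi_bracket_insertion Phi_bracket_wedge // (mulnC n m).
by rewrite !(scalerN, scalerDr, scalerBr) addrACA.
Qed.
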